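(* Let $T$ be a locally finite tree, $G\leq\mathrm{Aut}(T)$ a closed subgroup, $g\in G$ hyperbolic and $x\in\partial T$ the attracting fixed point of $g$. The following are equivalent: (i) $G_x$ is open in $G$; (ii) there is a compact open subgroup $K\leq G$ with $g^nKg^{-n}\supseteq K$ for all $n\in\mathbb{N}$; (iii) there is a compact open subgroup $K\leq G$ such that $[K:K\cap g^nKg^{-n}]$, $n\in\mathbb{N}$, is bounded; (iv) for all compact open subgroups $K\leq G$ the sequence $[K:K\cap g^nKg^{-n}]$, $n\in\mathbb{N}$, is bounded.
   Context: $\mathrm{Aut}(T)$ has the topology of pointwise convergence. A hyperbolic automorphism fixes no vertex or edge; it fixes exactly two boundary points and translates along the geodesic axis between them; the attracting fixed point is the one toward which it translates. *)

From Stdlib Require Import List Arith.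
Import ListNotations.

Set Implicit Arguments.
Section Defs.
Variable V : Type.
Variable adj : V -> V -> Prop.

Definition is_walk (c : nat -> V) (n : nat) : Prop :=
  forall i, i < n -> adj (c i) (c (S i)).

Definition is_cycle (c : nat -> V) (n : nat) : Prop :=
  3 <= n /\ is_walk c n /\ c n = c 0 /\
  (forall i j, i < n -> j < n -> i <> j -> c i <> c j).

Definition is_tree : Prop :=
  (forall u v, adj u v -> adj v u) /\
  (forall u, ~ adj u u) /\
  (forall u v, exists (c : nat -> V) (n : nat), c 0 = u /\ c n = v /\ is_walk c n) /\
  (forall c n, ~ is_cycle c n).

Definition locally_finite : Prop :=
  forall v, exists l : list V, forall w, adj v w -> In w l.

Definition is_aut (f : V -> V) : Prop :=
  (forall u v, f u = f v -> u = v) /\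
  (forall v, exists u, f u = v) /\
  (forall u v, adj u v <-> adj (f u) (f v)).

Definition agree_on (F : list V) (f h : V -> V) : Prop :=
  forall v, In v F -> h v = f v.

Definition subset (A B : (V -> V) -> Prop) : Prop := forall f, A f -> B f.

(** Open sets of Aut(T) for the topology of pointwise convergence
    (V discrete): basic neighbourhoods fix finitely many vertices. *)
Definition aut_open (U : (V -> V) -> Prop) : Prop :=
  forall f, is_aut f -> U f ->
    exists F : list V, forall h, is_aut h -> agree_on F f h -> U h.

Definition open_in (G U : (V -> V) -> Prop) : Prop :=
  subset U G /\
  forall f, U f -> exists F : list V, forall h, G h -> agree_on F f h -> U h.

Definition aut_compact (K : (V -> V) -> Prop) : Prop :=
  subset K is_aut /\
  forall (I : Type) (U : I -> (V -> V) -> Prop),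
    (forall i, aut_open (U i)) ->
    (forall k, K k -> exists i, U i k) ->
    exists l : list I, forall k, K k -> exists i, In i l /\ U i k.

Definition is_aut_subgroup (G : (V -> V) -> Prop) : Prop :=
  subset G is_aut /\
  G (fun v => v) /\
  (forall f h, G f -> G h -> G (fun v => f (h v))) /\
  (forall f, G f -> exists h, G h /\ (forall v, f (h v) = v) /\ (forall v, h (f v) = v)).

Definition closed_subgroup (G : (V -> V) -> Prop) : Prop :=
  is_aut_subgroup G /\
  forall f, is_aut f ->
    (forall F : list V, exists h, G h /\ agree_on F f h) -> G f.

Definition subgroup_of (G K : (V -> V) -> Prop) : Prop :=
  is_aut_subgroup K /\ subset K G.

Definition compact_open_subgroup (G K : (V -> V) -> Prop) : Prop :=
  subgroup_of G K /\ open_in G K /\ aut_compact K.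

Definition hyperbolic (g : V -> V) : Prop :=
  is_aut g /\
  (forall v, g v <> v) /\
  (forall u v, adj u v -> ~ (g u = v /\ g v = u)).

(** Boundary: geodesic rays up to eventual coincidence. *)
Definition is_ray (r : nat -> V) : Prop :=
  forall n, adj (r n) (r (S n)) /\ r n <> r (S (S n)).

Definition ray_equiv (r1 r2 : nat -> V) : Prop :=
  exists k m, forall n, r1 (n + k) = r2 (n + m).

(** [r] represents the attracting fixed point of g: r lies on the axis of g
    and g translates along r towards its end. *)
Definition attracting_ray (g : V -> V) (r : nat -> V) : Prop :=
  is_ray r /\ exists l, 0 < l /\ forall n, g (r n) = r (n + l).

Definition stabilizer (G : (V -> V) -> Prop) (r : nat -> V) : (V -> V) -> Prop :=
  fun h => G h /\ ray_equiv (fun n => h (r n)) r.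

(** g^n K g^-n = { h | exists k in K, h o g^n = g^n o k }. *)
Definition conj_set (g : V -> V) (n : nat) (K : (V -> V) -> Prop) : (V -> V) -> Prop :=
  fun h => exists k, K k /\ forall v, h (Nat.iter n g v) = Nat.iter n g (k v).

Definition inter (A B : (V -> V) -> Prop) : (V -> V) -> Prop :=
  fun f => A f /\ B f.

(** [K : H] <= B : K is covered by at most B left cosets a H with a in K. *)
Definition index_le (K H : (V -> V) -> Prop) (B : nat) : Prop :=
  exists s : list (V -> V), length s <= B /\ (forall a, In a s -> K a) /\
    forall k, K k -> exists a h, In a s /\ H h /\ forall v, k v = a (h v).

Definition index_seq_bounded (g : V -> V) (K : (V -> V) -> Prop) : Prop :=
  exists B, forall n, index_le K (inter K (conj_set g n K)) B.

End Defs.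

(* Let x be the end of the ray r, which g translates by l.  Since an automorphism fixing
   two vertices of a tree fixes the geodesic between them, G_x is open iff some finite
   set F has the property that every element of G fixing F fixes r pointwise.

   (i) -> (ii): the pointwise stabilizer of r is then compact open, and it is contained
   in all its conjugates g^n K g^-n because g maps r into itself.
   (i) -> (iv): write k in K as k = a s with a in a finite set of representatives of K
   modulo the fixer of F and s fixing r; the coset of k modulo K /\ g^n K g^-n is then
   determined by a and by the restriction of g^-n s g^n, which fixes r 0, to a fixed ball
   around r 0, and there are boundedly many such restrictions.
   (iii) -> (i): a bound on [K : K /\ g^n K g^-n] bounds uniformly the K-orbits of the
   vertices g^n (r 0) = r (n l).  Among the elements of K fixing r 0, those fixing
   r (n l) then fix the whole ray as soon as n is large, by a pigeonhole argument on
   orbits, so a neighbourhood of the identity fixes r. *)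

From Stdlib Require Import List Arith Lia Classical ClassicalEpsilon.
Import ListNotations.

Set Implicit Arguments.

Fixpoint tuples {X : Type} (L : list X) (m : nat) : list (list X) :=
  match m with
  | 0 => [[]]
  | S m => flat_map (fun x => map (cons x) (tuples L m)) L
  end.

Lemma tuples_complete {X : Type} (L s : list X) :
  (forall x, In x s -> In x L) -> In s (tuples L (length s)).
Proof.
  induction s as [| a s IH]; intros Hs; cbn; [now left |].
  apply in_flat_map; exists a; split; [apply Hs; now left |].
  apply in_map, IH; intros x Hx; apply Hs; now right.
Qed.

Lemma pigeonhole {X : Type} (f : nat -> X) (L : list X) (M : nat) :
  length L <= M -> (forall i, i <= M -> In (f i) L) ->
  exists i j, i < j <= M /\ f i = f j.
Proof.
  intros HL Hf; apply NNPP; intro Hinj.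
  assert (Hnodup : NoDup (map f (seq 0 (S M)))).
  { apply NoDup_map_NoDup_ForallPairs; [| apply seq_NoDup].
    intros i j Hi Hj Hij; apply in_seq in Hi, Hj.
    destruct (Nat.lt_total i j) as [Hlt | [Heq | Hlt]]; [| exact Heq |];
      exfalso; apply Hinj.
    - exists i, j; split; [lia | exact Hij].
    - exists j, i; split; [lia | now symmetry]. }
  apply NoDup_incl_length with (l' := L) in Hnodup.
  - rewrite length_map, length_seq in Hnodup; lia.
  - intros x Hx; apply in_map_iff in Hx as [i [<- Hi]]; apply in_seq in Hi; apply Hf; lia.
Qed.

Lemma agree_on_of_map_eq {V : Type} (f h : V -> V) (L : list V) :
  map f L = map h L -> agree_on L f h.
Proof.
  induction L as [| a L IH]; intros Heq v Hv; [destruct Hv |].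
  injection Heq as Ha HL; destruct Hv as [<- | Hv]; [easy | now apply IH].
Qed.

Section TreeGeometry.
Variable V : Type.
Variable adj : V -> V -> Prop.
Hypothesis Htree : is_tree adj.

Definition nonbacktracking (c : nat -> V) (n : nat) : Prop :=
  forall i, i + 2 <= n -> c i <> c (i + 2).

Lemma adj_sym u v : adj u v -> adj v u.
Proof. exact (proj1 Htree u v). Qed.

Lemma adj_irrefl u : ~ adj u u.
Proof. exact (proj1 (proj2 Htree) u). Qed.

Lemma walk_prefix c n m : is_walk adj c n -> m <= n -> is_walk adj c m.
Proof. intros Hw Hm i Hi; apply Hw; lia. Qed.

Lemma nonbacktracking_prefix c n m : nonbacktracking c n -> m <= n -> nonbacktracking c m.
Proof. intros Hnb Hm i Hi; apply Hnb; lia. Qed.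

Lemma nonbacktracking_walk_open c n :
  is_walk adj c n -> nonbacktracking c n -> 1 <= n -> c 0 <> c n.
Proof.
  intros Hw Hnb Hn.
  enough (Hrep : forall d i, 1 <= d -> i + d <= n -> c i <> c (i + d))
    by exact (Hrep n 0 Hn (le_n n)).
  (* a repetition at minimal distance d spans a cycle of length d *)
  intro d; induction d as [d IH] using (well_founded_induction lt_wf); intros i Hd Hid Hci.
  destruct (classic (exists a b, a < b < d /\ c (i + a) = c (i + b)))
    as [[a [b [Hab Hcab]]] | Hmin].
  - apply (IH (b - a) ltac:(lia) (i + a)); [lia | lia |].
    now replace (i + a + (b - a)) with (i + b) by lia.
  - assert (d = 1 \/ d = 2 \/ 3 <= d) as [-> | [-> | Hd3]] by lia.
    + apply (adj_irrefl (u := c i)).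
      pose proof (Hw i ltac:(lia)) as Hadj.
      now rewrite <- Nat.add_1_r, <- Hci in Hadj.
    + exact (Hnb i ltac:(lia) Hci).
    + apply (proj2 (proj2 (proj2 Htree)) (fun k => c (i + k)) d).
      split; [exact Hd3 | split; [| split]].
      * intros k Hk; rewrite <- plus_n_Sm; apply Hw; lia.
      * now rewrite Nat.add_0_r.
      * intros a b Ha Hb Hab Hcab; apply Hmin.
        destruct (Nat.lt_gt_cases a b) as [[Hlt | Hlt] _]; [exact Hab | |].
        -- now exists a, b.
        -- now exists b, a.
Qed.

Definition concat_rev (p q : nat -> V) (a b : nat) (i : nat) : V :=
  if le_lt_dec i a then p i else q (a + b - i).

Lemma concat_rev_walk p q a b :
  is_walk adj p a -> is_walk adj q b -> p a = q b ->
  is_walk adj (concat_rev p q a b) (a + b).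
Proof.
  intros Hp Hq Hpq i Hi; unfold concat_rev.
  destruct (le_lt_dec i a), (le_lt_dec (S i) a); try lia.
  - apply Hp; lia.
  - replace i with a by lia; replace (a + b - S a) with (b - 1) by lia.
    rewrite Hpq; apply adj_sym.
    replace b with (S (b - 1)) at 2 by lia; apply Hq; lia.
  - replace (a + b - i) with (S (a + b - S i)) by lia; apply adj_sym, Hq; lia.
Qed.

Lemma concat_rev_nonbacktracking p q a b :
  nonbacktracking p (S a) -> nonbacktracking q (S b) ->
  p (S a) = q (S b) -> p a <> q b ->
  nonbacktracking (concat_rev p q (S a) (S b)) (S a + S b).
Proof.
  intros Hp Hq Hpq Hjoin i Hi; unfold concat_rev.
  destruct (le_lt_dec i (S a)), (le_lt_dec (i + 2) (S a)); try lia.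
  - apply Hp; lia.
  - assert (i = a \/ i = S a) as [-> | ->] by lia.
    + now replace (S a + S b - (a + 2)) with b by lia.
    + replace (S a + S b - (S a + 2)) with (b - 1) by lia; rewrite Hpq.
      intro Heq; apply (Hq (b - 1)); [lia |].
      now replace (b - 1 + 2) with (S b) by lia.
  - replace (S a + S b - i) with (S a + S b - (i + 2) + 2) by lia.
    intro Heq; apply (Hq (S a + S b - (i + 2))); [lia | easy].
Qed.

Lemma nonbacktracking_walk_unique a : forall b p q,
  is_walk adj p a -> nonbacktracking p a -> is_walk adj q b -> nonbacktracking q b ->
  p 0 = q 0 -> p a = q b -> a = b /\ forall i, i <= a -> p i = q i.
Proof.
  induction a as [| a IH]; intros [| b] p q Hpw Hpn Hqw Hqn H0 Hend.
  - split; [easy | intros i Hi; now replace i with 0 by lia].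
  - exfalso; apply (nonbacktracking_walk_open Hqw Hqn); [lia | congruence].
  - exfalso; apply (nonbacktracking_walk_open Hpw Hpn); [lia | congruence].
  - destruct (classic (p a = q b)) as [Hpq | Hpq].
    + destruct (IH b p q) as [<- Hagree]; try easy.
      * exact (walk_prefix Hpw (Nat.le_succ_diag_r a)).
      * exact (nonbacktracking_prefix Hpn (Nat.le_succ_diag_r a)).
      * exact (walk_prefix Hqw (Nat.le_succ_diag_r b)).
      * exact (nonbacktracking_prefix Hqn (Nat.le_succ_diag_r b)).
      * split; [easy |]; intros i Hi.
        assert (i <= a \/ i = S a) as [Hle | ->] by lia; auto.
    + exfalso.
      apply (nonbacktracking_walk_open (c := concat_rev p q (S a) (S b)) (n := S a + S b)).
      * now apply concat_rev_walk.
      * now apply concat_rev_nonbacktracking.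
      * lia.
      * unfold concat_rev; destruct (le_lt_dec 0 (S a)), (le_lt_dec (S a + S b) (S a));
          try lia.
        now rewrite Nat.sub_diag.
Qed.

Definition embedding (h : V -> V) : Prop :=
  (forall u v, h u = h v -> u = v) /\ (forall u v, adj u v -> adj (h u) (h v)).

Lemma aut_embedding h : is_aut adj h -> embedding h.
Proof. intros [Hinj [_ Hadj]]; split; [exact Hinj | intros u v; apply Hadj]. Qed.

Lemma id_embedding : embedding (fun v => v).
Proof. now split. Qed.

Lemma embedding_ray_segment r h a m :
  is_ray adj r -> embedding h ->
  is_walk adj (fun i => h (r (a + i))) m /\ nonbacktracking (fun i => h (r (a + i))) m.
Proof.
  intros Hr [Hinj Hadj]; split.
  - intros i _; rewrite <- plus_n_Sm; apply Hadj, Hr.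
  - intros i _ Heq; apply Hinj in Heq.
    replace (a + (i + 2)) with (S (S (a + i))) in Heq by lia.
    exact (proj2 (Hr (a + i)) Heq).
Qed.

Lemma embeddings_agree_on_ray_segment r h1 h2 a b :
  is_ray adj r -> embedding h1 -> embedding h2 ->
  h1 (r a) = h2 (r a) -> h1 (r b) = h2 (r b) ->
  forall c, a <= c <= b -> h1 (r c) = h2 (r c).
Proof.
  intros Hr E1 E2 Ha Hb c Hc.
  destruct (embedding_ray_segment a (b - a) Hr E1) as [W1 N1].
  destruct (embedding_ray_segment a (b - a) Hr E2) as [W2 N2].
  destruct (nonbacktracking_walk_unique W1 N1 W2 N2) as [_ Hagree].
  - now rewrite Nat.add_0_r.
  - now replace (a + (b - a)) with b by lia.
  - specialize (Hagree (c - a) ltac:(lia)); cbn beta in Hagree.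
    now replace (a + (c - a)) with c in Hagree by lia.
Qed.

Lemma embedding_fixing_end_fixes_ray r h :
  is_ray adj r -> embedding h -> h (r 0) = r 0 ->
  ray_equiv (fun n => h (r n)) r -> forall j, h (r j) = r j.
Proof.
  intros Hr Eh H0 [k [m Hkm]] j.
  destruct (embedding_ray_segment 0 k Hr Eh) as [W1 N1].
  destruct (embedding_ray_segment 0 m Hr id_embedding) as [W2 N2].
  destruct (nonbacktracking_walk_unique W1 N1 W2 N2 H0 (Hkm 0)) as [<- Hagree].
  destruct (le_lt_dec j k) as [Hj | Hj].
  - exact (Hagree j Hj).
  - specialize (Hkm (j - k)); now replace (j - k + k) with j in Hkm by lia.
Qed.

Lemma embedding_fixes_ray_segment r p b :
  is_ray adj r -> embedding p ->
  p (r 0) = r 0 -> p (r b) = r b -> forall c, c <= b -> p (r c) = r c.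
Proof.
  intros Hr Ep H0 Hb c Hc.
  exact (embeddings_agree_on_ray_segment Hr Ep id_embedding H0 Hb (conj (Nat.le_0_l c) Hc)).
Qed.

(* Otherwise there are q_0, q_1, ... in P such that q_k fixes r up to the points moved
   by all q_i with i < k; then q_0, ..., q_M take distinct values at one far point of r. *)
Lemma ray_fixing_stabilizes r l M (P : (V -> V) -> Prop) :
  is_ray adj r -> 0 < l ->
  (forall p, P p -> embedding p /\ p (r 0) = r 0) ->
  (forall n, exists L, length L <= M /\ forall p, P p -> In (p (r (n * l))) L) ->
  exists N, forall p, P p -> p (r (N * l)) = r (N * l) -> forall j, p (r j) = r j.
Proof.
  intros Hr Hl HP Horbit; apply NNPP; intro Hnone.
  assert (Hmove : forall N, exists pj : (V -> V) * nat,
    P (fst pj) /\ fst pj (r (N * l)) = r (N * l) /\ fst pj (r (snd pj)) <> r (snd pj)).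
  { intro N; apply NNPP; intro Hfix; apply Hnone; exists N; intros p Hp HN j.
    apply NNPP; intro Hj; apply Hfix; now exists (p, j). }
  destruct (choice _ Hmove) as [mover Hmover].
  set (Ns := fun i => Nat.iter i (fun N => N + snd (mover N)) 0).
  set (q := fun i => fst (mover (Ns i))).
  assert (HNs_mono : forall i k, i <= k -> Ns i <= Ns k).
  { intros i k Hik; induction Hik as [| k _ IH]; [easy |].
    change (Ns (S k)) with (Ns k + snd (mover (Ns k))); lia. }
  assert (Hq_fix : forall i c, c <= Ns i * l -> q i (r c) = r c).
  { intros i; destruct (HP _ (proj1 (Hmover (Ns i)))) as [Eqi Hqi0].
    exact (embedding_fixes_ray_segment Hr Eqi Hqi0 (proj1 (proj2 (Hmover (Ns i))))). }
  set (T := Ns (S M) * l).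
  destruct (Horbit (Ns (S M))) as [L [HL Hin]].
  destruct (pigeonhole (fun i => q i (r T)) L HL) as [i [k [[Hik HkM] Heq]]].
  { intros i _; apply Hin, Hmover. }
  set (j := snd (mover (Ns i))).
  assert (Hj : j <= Ns (S i) * l).
  { change (Ns (S i)) with (Ns i + j); nia. }
  apply (proj2 (proj2 (Hmover (Ns i)))); fold j; fold (q i).
  assert (HEi : embedding (q i) /\ q i (r 0) = r 0) by apply HP, Hmover.
  assert (HEk : embedding (q k) /\ q k (r 0) = r 0) by apply HP, Hmover.
  destruct HEi as [Ei Hi0], HEk as [Ek Hk0].
  rewrite (embeddings_agree_on_ray_segment Hr Ei Ek (a := 0) (b := T));
    [| congruence | exact Heq |].
  - apply Hq_fix; specialize (HNs_mono (S i) k Hik); nia.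
  - specialize (HNs_mono (S i) (S M) ltac:(lia)); unfold T; nia.
Qed.

End TreeGeometry.

Section Balls.
Variable V : Type.
Variable adj : V -> V -> Prop.
Variable v0 : V.

Definition ball (n : nat) (w : V) : Prop :=
  exists c m, m <= n /\ c 0 = v0 /\ c m = w /\ is_walk adj c m.

Lemma ball_mono n m w : ball n w -> n <= m -> ball m w.
Proof. intros [c [k [Hk Hc]]] Hnm; exists c, k; split; [lia | exact Hc]. Qed.

Lemma ball_image h n w :
  (forall u v, adj u v -> adj (h u) (h v)) -> h v0 = v0 -> ball n w -> ball n (h w).
Proof.
  intros Hadj H0 [c [m [Hm [Hc0 [Hcm Hwalk]]]]].
  exists (fun i => h (c i)), m; repeat split; try easy.
  - now rewrite Hc0.
  - now rewrite Hcm.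
  - intros i Hi; apply Hadj, Hwalk, Hi.
Qed.

Lemma ball_preimage h n w :
  is_aut adj h -> h v0 = v0 -> ball n w -> exists u, ball n u /\ h u = w.
Proof.
  intros [Hinj [Hsurj Hadj]] H0 [c [m [Hm [Hc0 [Hcm Hwalk]]]]].
  destruct (choice _ Hsurj) as [hinv Hhinv].
  exists (hinv w); split; [| apply Hhinv].
  exists (fun i => hinv (c i)), m; repeat split; try easy.
  - apply Hinj; now rewrite Hhinv, Hc0.
  - now rewrite Hcm.
  - intros i Hi; apply Hadj; rewrite !Hhinv; apply Hwalk, Hi.
Qed.

Hypothesis Hlf : locally_finite adj.

Lemma ball_finite n : exists L, forall w, ball n w <-> In w L.
Proof.
  assert (Hcover : exists L, forall w, ball n w -> In w L).
  { destruct (choice _ Hlf) as [nbrs Hnbrs].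
    induction n as [| n [L HL]].
    - exists [v0]; intros w [c [m [Hm [H0 [Hw _]]]]].
      replace m with 0 in * by lia; left; congruence.
    - exists (L ++ flat_map nbrs L); intros w [c [m [Hm [H0 [Hw Hwalk]]]]].
      apply in_or_app.
      destruct (Nat.eq_dec m (S n)) as [-> | Hne].
      + right; apply in_flat_map; exists (c n); split.
        * apply HL; exists c, n; repeat split; try easy.
          exact (walk_prefix Hwalk (Nat.le_succ_diag_r n)).
        * apply Hnbrs; rewrite <- Hw; apply Hwalk; lia.
      + left; apply HL; exists c, m; repeat split; try easy; lia. }
  destruct Hcover as [L HL].
  exists (filter (fun w => if excluded_middle_informative (ball n w) then true else false) L).
  intro w; rewrite filter_In.
  destruct (excluded_middle_informative (ball n w)) as [Hw | Hw]; split.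
  - intros _; split; [exact (HL w Hw) | reflexivity].
  - intros _; exact Hw.
  - intros Hw'; contradiction.
  - intros [_ Hfalse]; discriminate.
Qed.

Definition ball_list (n : nat) : list V :=
  proj1_sig (constructive_indefinite_description _ (ball_finite n)).

Lemma ball_list_spec n w : ball n w <-> In w (ball_list n).
Proof. exact (proj2_sig (constructive_indefinite_description _ (ball_finite n)) w). Qed.

Hypothesis Htree : is_tree adj.

Lemma ball_exhaustive w : exists n, ball n w.
Proof.
  destruct (proj1 (proj2 (proj2 Htree)) v0 w) as [c [n [H0 [Hn Hw]]]].
  now exists n, c, n.
Qed.

Lemma ball_contains_list (F : list V) : exists n, forall w, In w F -> ball n w.
Proof.
  induction F as [| a F [n IH]]; [now exists 0 |].
  destruct (ball_exhaustive a) as [m Hm]; exists (max n m); intros w [<- | Hw].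
  - apply (ball_mono Hm); lia.
  - apply (ball_mono (IH w Hw)); lia.
Qed.

Definition radius (w : V) : nat :=
  proj1_sig (constructive_indefinite_description _ (ball_exhaustive w)).

Lemma radius_spec w : ball (radius w) w.
Proof. exact (proj2_sig (constructive_indefinite_description _ (ball_exhaustive w))). Qed.

End Balls.

Section CompactnessCriterion.
Variable V : Type.
Variable adj : V -> V -> Prop.
Hypothesis Htree : is_tree adj.
Hypothesis Hlf : locally_finite adj.
Variable v0 : V.
Variable K : (V -> V) -> Prop.
Hypothesis HKaut : subset K (is_aut adj).
Hypothesis HKfix : forall k, K k -> k v0 = v0.
Hypothesis HKclosed :
  forall f, is_aut adj f -> (forall F, exists h, K h /\ agree_on F f h) -> K f.
Variable I : Type.
Variable U : I -> (V -> V) -> Prop.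

Definition finitely_covered (S : (V -> V) -> Prop) : Prop :=
  exists l : list I, forall k, S k -> exists i, In i l /\ U i k.

Lemma finitely_covered_union {X : Type} (T : list X) (P : X -> (V -> V) -> Prop) :
  (forall t, In t T -> finitely_covered (P t)) ->
  finitely_covered (fun k => exists t, In t T /\ P t k).
Proof.
  induction T as [| t T IH]; intros HT; [exists []; now intros k [t [[] _]] |].
  destruct (HT t (or_introl eq_refl)) as [l1 H1].
  destruct IH as [l2 H2]; [intros t' Ht'; apply HT; now right |].
  exists (l1 ++ l2); intros k [t' [[<- | Ht'] Hk]].
  - destruct (H1 k Hk) as [i [Hi HU]]; exists i; split; [apply in_or_app; now left | exact HU].
  - destruct (H2 k (ex_intro _ t' (conj Ht' Hk))) as [i [Hi HU]].
    exists i; split; [apply in_or_app; now right | exact HU].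
Qed.

Definition uncoverable (n : nat) (k0 : V -> V) : Prop :=
  ~ finitely_covered (fun k => K k /\ agree_on (ball_list v0 Hlf n) k0 k).

(* König's lemma: the elements of K that agree with k0 on the ball of radius n fall
   into finitely many classes according to their values on the next ball. *)
Lemma uncoverable_refine n k0 : uncoverable n k0 ->
  exists k1, K k1 /\ agree_on (ball_list v0 Hlf n) k0 k1 /\ uncoverable (S n) k1.
Proof.
  intros Hunc; apply NNPP; intro Hnone; apply Hunc.
  set (L := ball_list v0 Hlf (S n)).
  set (P := fun (t : list V) k => K k /\ agree_on (ball_list v0 Hlf n) k0 k /\ map k L = t).
  assert (Hclasses : finitely_covered (fun k => exists t, In t (tuples L (length L)) /\ P t k)).
  { apply finitely_covered_union; intros t _.
    destruct (classic (exists k1, P t k1)) as [[k1 [Hk1 [Hagree1 Hmap1]]] | Hempty].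
    - assert (Hcov1 : finitely_covered (fun k => K k /\ agree_on L k1 k)).
      { apply NNPP; intro Hcov1; apply Hnone; now exists k1. }
      destruct Hcov1 as [l Hl]; exists l; intros k [Hk [_ Hmap]]; apply Hl.
      split; [exact Hk |]; apply agree_on_of_map_eq; congruence.
    - exists []; intros k Hk; exfalso; apply Hempty; now exists k. }
  destruct Hclasses as [l Hl]; exists l; intros k [Hk Hagree]; apply Hl.
  exists (map k L); split; [| easy].
  rewrite <- (length_map k L); apply tuples_complete.
  intros x Hx; apply in_map_iff in Hx as [y [<- Hy]].
  apply ball_list_spec in Hy; apply ball_list_spec.
  apply ball_image; [apply (HKaut Hk) | exact (HKfix Hk) | exact Hy].
Qed.

Variable refine : nat -> (V -> V) -> V -> V.
Hypothesis Hrefine : forall n k0, uncoverable n k0 ->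
  K (refine n k0) /\ agree_on (ball_list v0 Hlf n) k0 (refine n k0) /\
  uncoverable (S n) (refine n k0).
Hypothesis Hstart : uncoverable 0 (fun v => v).

Fixpoint approx (n : nat) : V -> V :=
  match n with 0 => fun v => v | S n => refine n (approx n) end.

Lemma approx_uncoverable n : uncoverable n (approx n).
Proof. induction n as [| n IH]; [exact Hstart | exact (proj2 (proj2 (Hrefine IH)))]. Qed.

Lemma approx_K n : K (approx (S n)).
Proof. exact (proj1 (Hrefine (approx_uncoverable n))). Qed.

Lemma approx_stable n m v : ball adj v0 n v -> n <= m -> approx m v = approx n v.
Proof.
  intros Hv Hnm; induction Hnm as [| m Hnm IH]; [easy |].
  rewrite <- IH; cbn.
  apply (proj1 (proj2 (Hrefine (approx_uncoverable m)))), ball_list_spec.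
  exact (ball_mono Hv Hnm).
Qed.

Definition approx_limit (v : V) : V := approx (radius v0 Htree v) v.

Lemma approx_limit_eq v m : ball adj v0 m v -> approx_limit v = approx m v.
Proof.
  intros Hv; unfold approx_limit.
  rewrite <- (@approx_stable _ (max m (radius v0 Htree v))) by (apply radius_spec || lia).
  apply approx_stable; [exact Hv | lia].
Qed.

Lemma approx_limit_local (F : list V) :
  exists m, forall v, In v F -> approx_limit v = approx (S m) v.
Proof.
  destruct (ball_contains_list v0 Htree F) as [m Hm]; exists m; intros v Hv.
  apply approx_limit_eq, (ball_mono (Hm v Hv)); lia.
Qed.

Lemma approx_limit_aut : is_aut adj approx_limit.
Proof.
  split; [| split].
  - intros u v Heq; destruct (approx_limit_local [u; v]) as [m Hm].
    rewrite (Hm u), (Hm v) in Heq by (cbn; tauto).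
    exact (proj1 (HKaut (approx_K m)) u v Heq).
  - intro w; destruct (ball_exhaustive v0 Htree w) as [n Hn].
    assert (Hn' : ball adj v0 (S n) w) by (apply (ball_mono Hn); lia).
    destruct (ball_preimage (HKaut (approx_K n)) (HKfix (approx_K n)) Hn') as [u [Hu Heq]].
    exists u; now rewrite (approx_limit_eq Hu).
  - intros u v; destruct (approx_limit_local [u; v]) as [m Hm].
    rewrite (Hm u), (Hm v) by (cbn; tauto).
    exact (proj2 (proj2 (HKaut (approx_K m))) u v).
Qed.

Lemma approx_limit_K : K approx_limit.
Proof.
  apply HKclosed; [exact approx_limit_aut |]; intro F.
  destruct (approx_limit_local F) as [m Hm].
  exists (approx (S m)); split; [apply approx_K | intros v Hv; symmetry; now apply Hm].
Qed.

Hypothesis HUopen : forall i, aut_open adj (U i).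
Hypothesis HUcover : forall k, K k -> exists i, U i k.

Lemma approx_limit_absurd : False.
Proof.
  destruct (HUcover approx_limit_K) as [i Hi].
  destruct (HUopen approx_limit_aut Hi) as [F HF].
  destruct (ball_contains_list v0 Htree F) as [M HM].
  apply (approx_uncoverable M); exists [i]; intros k [Hk Hagree].
  exists i; split; [now left |].
  apply HF; [exact (HKaut Hk) |]; intros v Hv.
  rewrite (approx_limit_eq (HM v Hv)); apply Hagree, ball_list_spec, HM, Hv.
Qed.

End CompactnessCriterion.

Lemma compact_of_closed_fixing {V : Type} {adj : V -> V -> Prop} (v0 : V)
  (K : (V -> V) -> Prop) :
  is_tree adj -> locally_finite adj ->
  subset K (is_aut adj) -> (forall k, K k -> k v0 = v0) ->
  (forall f, is_aut adj f -> (forall F, exists h, K h /\ agree_on F f h) -> K f) ->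
  aut_compact adj K.
Proof.
  intros Htree Hlf HKaut HKfix HKclosed; split; [exact HKaut |].
  intros I U HUopen HUcover; apply NNPP; intro Hnone.
  destruct (choice (fun (nk : nat * (V -> V)) k1 => uncoverable Hlf v0 K U (fst nk) (snd nk) ->
      K k1 /\ agree_on (ball_list v0 Hlf (fst nk)) (snd nk) k1 /\
      uncoverable Hlf v0 K U (S (fst nk)) k1)) as [refine Hrefine].
  { intros [n k0]; destruct (classic (uncoverable Hlf v0 K U n k0)) as [Hunc | Hcov].
    - destruct (uncoverable_refine HKaut HKfix Hunc) as [k1 Hk1]; now exists k1.
    - exists k0; intro Hunc; contradiction. }
  apply (@approx_limit_absurd _ _ Htree Hlf v0 K HKaut HKfix HKclosed I U
           (fun n k0 => refine (n, k0)) (fun n k0 => Hrefine (n, k0)));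
    [| exact HUopen | exact HUcover].
  intros [l Hl]; apply Hnone; exists l; intros k Hk; apply Hl; split; [exact Hk |].
  intros v Hv; apply ball_list_spec in Hv as [c [m [Hm [H0 [Hcv _]]]]].
  replace m with 0 in Hcv by lia; rewrite <- Hcv, H0; exact (HKfix k Hk).
Qed.

Section Subgroups.
Variable V : Type.
Variable adj : V -> V -> Prop.

Lemma compact_finite_representatives K (F : list V) : aut_compact adj K ->
  exists A, (forall a, In a A -> K a) /\ forall k, K k -> exists a, In a A /\ agree_on F a k.
Proof.
  intros [HKaut HKcover].
  destruct (HKcover {a | K a} (fun a h => is_aut adj h /\ agree_on F (proj1_sig a) h))
    as [l Hl].
  - intros a f Hf [_ Hagree]; exists F; intros h Hh Hfh; split; [exact Hh |].
    intros v Hv; rewrite Hfh by exact Hv; exact (Hagree v Hv).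
  - intros k Hk; exists (exist _ k Hk); split; [exact (HKaut k Hk) | easy].
  - exists (map (@proj1_sig _ _) l); split.
    + intros a Ha; apply in_map_iff in Ha as [[a' Ha'] [<- _]]; exact Ha'.
    + intros k Hk; destruct (Hl k Hk) as [a [Ha [_ Hagree]]].
      exists (proj1_sig a); split; [now apply in_map | exact Hagree].
Qed.

Lemma compact_orbit_finite K (v : V) : aut_compact adj K ->
  exists L, forall k, K k -> In (k v) L.
Proof.
  intros HK; destruct (compact_finite_representatives [v] HK) as [A [_ HA]].
  exists (map (fun a => a v) A); intros k Hk; destruct (HA k Hk) as [a [Ha Hagree]].
  rewrite (Hagree v (or_introl eq_refl)); now apply in_map with (f := fun a => a v).
Qed.

Lemma index_le_of_codes K H (codes : list (list V)) (W : list V) :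
  is_aut_subgroup adj K ->
  (forall k, K k -> In (map k W) codes) ->
  (forall k, K k -> (forall w, In w W -> k w = w) -> H k) ->
  index_le K H (length codes).
Proof.
  intros [_ [HKid [HKcomp HKinv]]] Hcodes HH.
  destruct (choice (fun (c : list V) a => K a /\ ((exists k, K k /\ map k W = c) -> map a W = c)))
    as [rep Hrep].
  { intro c; destruct (classic (exists k, K k /\ map k W = c)) as [[k [Hk Hkc]] | Hnone].
    - now exists k.
    - exists (fun v => v); split; [exact HKid | contradiction]. }
  exists (map rep codes); split; [now rewrite length_map | split].
  - intros a Ha; apply in_map_iff in Ha as [c [<- _]]; apply Hrep.
  - intros k Hk; set (a := rep (map k W)).
    destruct (Hrep (map k W)) as [Ha Hcode]; fold a in Ha, Hcode.
    destruct (HKinv a Ha) as [ainv [Hainv [Ha_ainv Hainv_a]]].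
    exists a, (fun v => ainv (k v)); split; [apply in_map, Hcodes, Hk | split].
    + apply HH; [exact (HKcomp _ _ Hainv Hk) |]; intros w Hw.
      rewrite (agree_on_of_map_eq _ _ _ (Hcode (ex_intro _ k (conj Hk eq_refl))) w Hw).
      apply Hainv_a.
    + intro v; now rewrite Ha_ainv.
Qed.

Lemma orbit_bound_of_index_le K (g : V -> V) n B (v : V) L0 :
  index_le K (inter K (conj_set g n K)) B -> (forall k, K k -> In (k v) L0) ->
  exists L, length L <= B * length L0 /\ forall p, K p -> In (p (Nat.iter n g v)) L.
Proof.
  intros [s [Hs [_ Hcosets]]] HL0.
  exists (flat_map (fun a => map (fun u => a (Nat.iter n g u)) L0) s); split.
  - rewrite (flat_map_constant_length (c := length L0)) by (intros; apply length_map).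
    now apply Nat.mul_le_mono_r.
  - intros p Hp; destruct (Hcosets p Hp) as [a [c [Ha [[_ [k [Hk Hck]]] Hp_ac]]]].
    apply in_flat_map; exists a; split; [exact Ha |].
    rewrite Hp_ac, Hck; apply in_map with (f := fun u => a (Nat.iter n g u)), HL0, Hk.
Qed.

Lemma index_seq_bounded_of_conj_increasing (g : V -> V) K :
  is_aut_subgroup adj K -> (forall n, subset K (conj_set g n K)) -> index_seq_bounded g K.
Proof.
  intros [_ [HKid _]] Hincr; exists 1; intro n.
  exists [fun v => v]; split; [easy | split].
  - intros a [<- | []]; exact HKid.
  - intros k Hk; exists (fun v => v), k; split; [now left | split; [| easy]].
    split; [exact Hk | exact (Hincr n k Hk)].
Qed.

End Subgroups.

Section EndStabilizer.
Variable V : Type.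
Variable adj : V -> V -> Prop.
Variable G : (V -> V) -> Prop.
Hypothesis Htree : is_tree adj.
Hypothesis Hlf : locally_finite adj.
Hypothesis HG : closed_subgroup adj G.

Lemma G_aut f : G f -> is_aut adj f.
Proof. exact (proj1 (proj1 HG) f). Qed.

Lemma G_id : G (fun v => v).
Proof. exact (proj1 (proj2 (proj1 HG))). Qed.

Lemma G_comp f h : G f -> G h -> G (fun v => f (h v)).
Proof. exact (proj1 (proj2 (proj2 (proj1 HG))) f h). Qed.

Lemma G_inv f : G f ->
  exists h, G h /\ (forall v, f (h v) = v) /\ (forall v, h (f v) = v).
Proof. exact (proj2 (proj2 (proj2 (proj1 HG))) f). Qed.

Lemma G_iter f n : G f -> G (Nat.iter n f).
Proof. intros Hf; induction n as [| n IH]; [exact G_id | exact (G_comp Hf IH)]. Qed.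

Definition fixer (P : V -> Prop) : (V -> V) -> Prop :=
  fun h => G h /\ forall v, P v -> h v = v.

Lemma fixer_subgroup P : subgroup_of adj G (fixer P).
Proof.
  split; [split; [| split; [| split]] | now intros f []].
  - intros f [Hf _]; exact (G_aut Hf).
  - split; [exact G_id | easy].
  - intros f h [Hf Ef] [Hh Eh]; split; [exact (G_comp Hf Hh) |].
    intros v Hv; now rewrite Eh, Ef.
  - intros f [Hf Ef]; destruct (G_inv Hf) as [h [Hh [Hfh Hhf]]].
    exists h; split; [split; [exact Hh |] | easy].
    intros v Hv; rewrite <- (Ef v Hv) at 1; apply Hhf.
Qed.

Lemma fixer_open P F :
  (forall p, G p -> agree_on F (fun v => v) p -> forall v, P v -> p v = v) ->
  open_in G (fixer P).
Proof.
  intros HF; split; [now intros f [] |].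
  intros f [Hf Ef]; exists F; intros h Hh Hagree; split; [exact Hh |].
  destruct (G_inv Hf) as [finv [Hfinv [Hf_finv Hfinv_f]]].
  (* finv o h fixes F, hence fixes P, and h = f o (finv o h) *)
  intros v Hv; rewrite <- (Hf_finv (h v)).
  rewrite (HF (fun v => finv (h v)) (G_comp Hfinv Hh)); [exact (Ef v Hv) | | exact Hv].
  intros w Hw; rewrite Hagree by exact Hw; apply Hfinv_f.
Qed.

Lemma fixer_compact_open P F (v0 : V) : P v0 ->
  (forall p, G p -> agree_on F (fun v => v) p -> forall v, P v -> p v = v) ->
  compact_open_subgroup adj G (fixer P).
Proof.
  intros Hv0 HF; split; [apply fixer_subgroup | split; [exact (fixer_open P HF) |]].
  apply (compact_of_closed_fixing (v0 := v0) Htree Hlf).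
  - intros f [Hf _]; exact (G_aut Hf).
  - intros k [_ Hk]; exact (Hk v0 Hv0).
  - intros f Hf Happrox; split.
    + apply (proj2 HG f Hf); intro F'; destruct (Happrox F') as [h [[Hh _] Hagree]].
      now exists h.
    + intros v Hv; destruct (Happrox [v]) as [h [[_ Hh] Hagree]].
      rewrite <- (Hagree v (or_introl eq_refl)); exact (Hh v Hv).
Qed.

Section Translation.
Variable g ginv : V -> V.
Variable r : nat -> V.
Variable l : nat.
Hypothesis Hg : G g.
Hypothesis Hginv : G ginv.
Hypothesis Hg_ginv : forall v, g (ginv v) = v.
Hypothesis Hginv_g : forall v, ginv (g v) = v.
Hypothesis Hray : is_ray adj r.
Hypothesis Hl : 0 < l.
Hypothesis Htrans : forall n, g (r n) = r (n + l).

Definition conj_by (n : nat) (k : V -> V) : V -> V :=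
  fun v => Nat.iter n ginv (k (Nat.iter n g v)).

Lemma iter_g_ginv n v : Nat.iter n g (Nat.iter n ginv v) = v.
Proof.
  induction n as [| n IH]; [easy |].
  rewrite Nat.iter_succ_r; cbn; now rewrite Hg_ginv.
Qed.

Lemma iter_ginv_g n v : Nat.iter n ginv (Nat.iter n g v) = v.
Proof.
  induction n as [| n IH]; [easy |].
  rewrite Nat.iter_succ_r; cbn; now rewrite Hginv_g.
Qed.

Lemma iter_g_ray n m : Nat.iter n g (r m) = r (m + n * l).
Proof.
  induction n as [| n IH]; [cbn; now rewrite Nat.add_0_r |].
  rewrite Nat.iter_succ, IH, Htrans; f_equal.
  now rewrite Nat.mul_succ_l, Nat.add_assoc.
Qed.

Lemma conj_by_G n k : G k -> G (conj_by n k).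
Proof. intros Hk; exact (G_comp (G_iter n Hginv) (G_comp Hk (G_iter n Hg))). Qed.

Lemma conj_set_of_conj_by (K : (V -> V) -> Prop) n k : K (conj_by n k) -> conj_set g n K k.
Proof.
  intros Hk; exists (conj_by n k); split; [exact Hk |].
  intro v; symmetry; apply iter_g_ginv.
Qed.

Lemma conj_by_fixes_ray n k : (forall j, k (r j) = r j) -> forall j, conj_by n k (r j) = r j.
Proof.
  intros Hk j; unfold conj_by; rewrite iter_g_ray, Hk, <- iter_g_ray; apply iter_ginv_g.
Qed.

Definition ray_fixed_near_id (F : list V) : Prop :=
  forall p, G p -> agree_on F (fun v => v) p -> forall j, p (r j) = r j.

Lemma stabilizer_open_iff :
  open_in G (stabilizer G r) <-> exists F, ray_fixed_near_id F.
Proof.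
  split.
  - intros [_ Hopen].
    destruct (Hopen (fun v => v) (conj G_id (ex_intro _ 0 (ex_intro _ 0 (fun n => eq_refl)))))
      as [F HF].
    exists (r 0 :: F); intros p Hp Hagree.
    apply (embedding_fixing_end_fixes_ray Htree Hray (aut_embedding (G_aut Hp))).
    + exact (Hagree (r 0) (or_introl eq_refl)).
    + apply (HF p Hp); intros v Hv; apply Hagree; now right.
  - intros [F HF]; split; [now intros f [] |].
    intros f [Hf [k [m Hkm]]]; exists F; intros h Hh Hagree; split; [exact Hh |].
    destruct (G_inv Hf) as [finv [Hfinv [Hf_finv Hfinv_f]]].
    (* finv o h fixes F, hence the ray, so h agrees with f along the ray *)
    assert (Hhf : forall j, h (r j) = f (r j)).
    { intro j; rewrite <- (Hf_finv (h (r j))), (HF (fun v => finv (h v))); [easy | |].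
      - exact (G_comp Hfinv Hh).
      - intros w Hw; rewrite Hagree by exact Hw; apply Hfinv_f. }
    exists k, m; intro n; rewrite Hhf; apply Hkm.
Qed.

Definition ray_fixer : (V -> V) -> Prop := fixer (fun v => exists j, v = r j).

Lemma ray_fixer_compact_open F :
  ray_fixed_near_id F -> compact_open_subgroup adj G ray_fixer.
Proof.
  intros HF; apply (fixer_compact_open _ (F := F) (r 0)); [now exists 0 |].
  intros p Hp Hagree v [j ->]; exact (HF p Hp Hagree j).
Qed.

Lemma ray_fixer_conj_increasing n : subset ray_fixer (conj_set g n ray_fixer).
Proof.
  intros k [Hk Ek]; apply conj_set_of_conj_by; split; [exact (conj_by_G n Hk) |].
  intros v [j ->]; apply conj_by_fixes_ray; intro i; apply Ek; now exists i.
Qed.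

Lemma vertex_fixer_compact_open : compact_open_subgroup adj G (fixer (fun v => v = r 0)).
Proof.
  apply (fixer_compact_open _ (F := [r 0]) (r 0)); [easy |].
  intros p _ Hagree v ->; exact (Hagree (r 0) (or_introl eq_refl)).
Qed.

Lemma ray_fixed_near_id_of_index_bounded K :
  compact_open_subgroup adj G K -> index_seq_bounded g K -> exists F, ray_fixed_near_id F.
Proof.
  intros [[HKsub _] [[_ HKopen] HKcompact]] [B HB].
  destruct (HKopen (fun v => v) (proj1 (proj2 HKsub))) as [F0 HF0].
  destruct (compact_orbit_finite (r 0) HKcompact) as [L0 HL0].
  set (P := fun p => G p /\ agree_on F0 (fun v => v) p /\ p (r 0) = r 0).
  destruct (ray_fixing_stabilizes Htree (M := B * length L0) P Hray Hl) as [N HN].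
  - intros p [Hp [_ H0]]; split; [exact (aut_embedding (G_aut Hp)) | exact H0].
  - intro n; destruct (orbit_bound_of_index_le (r 0) L0 (HB n) HL0) as [L [HL Hin]].
    exists L; split; [exact HL |]; intros p [Hp [HpF0 _]].
    rewrite <- (Nat.add_0_l (n * l)), <- iter_g_ray; exact (Hin p (HF0 p Hp HpF0)).
  - exists (r 0 :: r (N * l) :: F0); intros p Hp Hagree.
    apply HN; [split; [exact Hp | split] |].
    + intros v Hv; apply Hagree; right; now right.
    + apply Hagree; now left.
    + apply Hagree; right; now left.
Qed.

Lemma index_seq_bounded_of_ray_fixed_near_id F K :
  ray_fixed_near_id F -> compact_open_subgroup adj G K -> index_seq_bounded g K.
Proof.
  intros HF [[HKsub HKG] [[_ HKopen] HKcompact]].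
  pose proof HKsub as [_ [HKid [HKcomp HKinv]]].
  destruct (HKopen (fun v => v) HKid) as [F0 HF0].
  destruct (compact_finite_representatives F HKcompact) as [A [HA HArep]].
  destruct (ball_contains_list (r 0) Htree F0) as [D HD].
  set (T := tuples (ball_list (r 0) Hlf D) (length F0)).
  exists (length A * length T); intro n.
  set (codes := flat_map (fun a => map (map (fun w => a (Nat.iter n g w))) T) A).
  replace (length A * length T) with (length codes)
    by (apply flat_map_constant_length; intros; apply length_map).
  apply (index_le_of_codes _ codes (map (Nat.iter n g) F0) HKsub).
  - intros k Hk; destruct (HArep k Hk) as [a [Ha Hagree]].
    destruct (HKinv a (HA a Ha)) as [ainv [Hainv [Ha_ainv Hainv_a]]].
    set (s := fun v => ainv (k v)).
    assert (Hs : G s) by exact (HKG _ (HKcomp _ _ Hainv Hk)).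
    assert (Hs_ray : forall j, s (r j) = r j).
    { apply HF; [exact Hs |]; intros v Hv; unfold s; rewrite (Hagree v Hv); apply Hainv_a. }
    (* k = a o s and s g^n = g^n (conj_by n s) *)
    apply in_flat_map; exists a; split; [exact Ha |].
    apply in_map_iff; exists (map (conj_by n s) F0); split.
    + rewrite !map_map; apply map_ext; intro w.
      unfold conj_by; rewrite iter_g_ginv; unfold s; now rewrite Ha_ainv.
    + unfold T; rewrite <- (length_map (conj_by n s) F0); apply tuples_complete.
      intros x Hx; apply in_map_iff in Hx as [w [<- Hw]]; apply ball_list_spec.
      apply ball_image; [| | exact (HD w Hw)].
      * exact (proj2 (aut_embedding (G_aut (conj_by_G n Hs)))).
      * exact (conj_by_fixes_ray n s Hs_ray 0).
  - intros k Hk Hfix; split; [exact Hk |].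
    apply conj_set_of_conj_by, HF0; [exact (conj_by_G n (HKG k Hk)) |].
    intros w Hw; unfold conj_by; rewrite Hfix by (now apply in_map); apply iter_ginv_g.
Qed.

End Translation.
End EndStabilizer.

Theorem proposition3p2 (V : Type) (adj : V -> V -> Prop)
  (G : (V -> V) -> Prop) (g : V -> V) (r : nat -> V) :
  is_tree adj -> locally_finite adj -> closed_subgroup adj G ->
  G g -> hyperbolic adj g -> attracting_ray adj g r ->
  (open_in G (stabilizer G r) <->
     exists K, compact_open_subgroup adj G K /\
       forall n, subset K (conj_set g n K)) /\
  (open_in G (stabilizer G r) <->
     exists K, compact_open_subgroup adj G K /\ index_seq_bounded g K) /\
  (open_in G (stabilizer G r) <->
     forall K, compact_open_subgroup adj G K -> index_seq_bounded g K).
Proof.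
  intros Htree Hlf HG Hg _ [Hray [l [Hl Htrans]]].
  destruct (G_inv HG g Hg) as [ginv [Hginv [Hg_ginv Hginv_g]]].
  rewrite (stabilizer_open_iff Htree HG Hray).
  pose proof (ray_fixed_near_id_of_index_bounded Htree HG Hray Hl Htrans) as iii_i.
  pose proof (index_seq_bounded_of_ray_fixed_near_id
                Htree Hlf HG g ginv l Hg Hginv Hg_ginv Hginv_g Htrans) as i_iv.
  pose proof (ray_fixer_conj_increasing HG g ginv l Hg Hginv Hg_ginv Hginv_g Htrans) as Hincr.
  pose proof (vertex_fixer_compact_open Htree Hlf HG r) as HK0.
  split; [| split]; split.
  - intros [F HF]; exists (ray_fixer G r).
    split; [exact (ray_fixer_compact_open Htree Hlf HG HF) | exact Hincr].
  - intros [K [HK HKincr]]; apply (iii_i K HK).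
    exact (index_seq_bounded_of_conj_increasing (proj1 (proj1 HK)) HKincr).
  - intros [F HF]; pose proof (ray_fixer_compact_open Htree Hlf HG HF) as HKr.
    exists (ray_fixer G r); split; [exact HKr | exact (i_iv F _ HF HKr)].
  - intros [K [HK HKbounded]]; exact (iii_i K HK HKbounded).
  - intros [F HF] K HK; exact (i_iv F K HF HK).
  - intros Hall; exact (iii_i _ HK0 (Hall _ HK0)).
Qed.
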